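(* If $L \subseteq \Sigma^*$ is regular, then $\psi_L$ is a $\leftarrow$-transduction; in particular $\psi_L(\Sigma^* )$ and $\psi_L(L)$ are regular. Furthermore, $\psi_L$ is a $\leftarrow$-reduction from $L$ to $\psi_L(L)$.
   Context: The Myhill–Nerode congruence: $x\sim_L y$ iff for all $z\in\Sigma^*$, $xz\in L\iff yz\in L$ (finitely many classes for regular $L$). $\psi_L(a_1\cdots a_n)=[a_1\cdots a_n]_{\sim_L}[a_2\cdots a_n]_{\sim_L}\cdots[a_n]_{\sim_L}$, a word over the alphabet $\Sigma^*/{\sim_L}$. A Mealy machine $(Q,\Sigma,\Gamma,q_0,\delta)$ with finite $Q$ and $\delta\colon Q\times\Sigma\to Q\times\Gamma$ defines $\tau_q$ by $\tau_q(\varepsilon)=\varepsilon$, $\tau_p(bu)=c\,\tau_q(u)$ if $\delta(p,b)=(q,c)$; a $\leftarrow$-transduction is a map of the form $x\mapsto\tau_{q_0}(x^\mathsf{R})^\mathsf{R}$ ($^\mathsf{R}$ = word reversal). A $\leftarrow$-reduction from $K$ to $K'$ is a $\leftarrow$-transduction $\tau$ with $x\in K\iff\tau(x)\in K'$ for all $x$. *)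

From Stdlib Require List.
From mathcomp Require Import all_boot.
Set Implicit Arguments. Unset Strict Implicit. Unset Printing Implicit Defensive.

Definition lang (A : Type) := seq A -> Prop.

Definition over (A : Type) (Alph : seq A) (w : seq A) : Prop :=
  forall a, List.In a w -> List.In a Alph.

Definition dfa_accepts (A : Type) (Q : finType) (d : Q -> A -> Q) (q0 : Q)
  (F : pred Q) (w : seq A) : bool := F (foldl d q0 w).

Definition regular (A : Type) (K : lang A) : Prop :=
  exists (Alph : seq A),
    (forall w, K w -> over Alph w) /\
    exists (Q : finType) (q0 : Q) (d : Q -> A -> Q) (F : pred Q),
      forall w, over Alph w -> (K w <-> dfa_accepts d q0 F w).

Definition nerode (S : Type) (L : lang S) (x y : seq S) : Prop :=
  forall z, L (x ++ z) <-> L (y ++ z).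

Definition nclass (S : Type) (L : lang S) (x : seq S) : seq S -> Prop :=
  fun y => nerode L x y.

(* psi_L(a1...an) = [a1...an][a2...an]...[an] *)
Definition psi (S : Type) (L : lang S) (x : seq S) : seq (seq S -> Prop) :=
  [seq nclass L (drop i x) | i <- iota 0 (size x)].

Fixpoint mealy_out (S G : Type) (Q : Type) (delta : Q -> S -> Q * G)
  (p : Q) (u : seq S) : seq G :=
  match u with
  | [::] => [::]
  | b :: u' => let: (q, c) := delta p b in c :: mealy_out delta q u'
  end.

Definition left_transduction (S G : Type) (f : seq S -> seq G) : Prop :=
  exists (Q : finType) (q0 : Q) (delta : Q -> S -> Q * G),
    forall x, f x = rev (mealy_out delta q0 (rev x)).

Definition left_reduction (S G : Type) (f : seq S -> seq G)
  (K : lang S) (K' : lang G) : Prop :=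
  left_transduction f /\ forall x, K x <-> K' (f x).

Definition img_lang (S G : Type) (f : seq S -> seq G) (K : lang S) : lang G :=
  fun w => exists x, K x /\ w = f x.

(** The Myhill–Nerode class of a word [w] is determined by its image
    [q |-> q.w] in the transition monoid of a DFA for [L], and that image can be
    computed by reading [w] from right to left ([a w] acts as [q |-> (q.a).w]).
    So a Mealy machine whose states are transformations reads [x^R] and emits,
    after each prefix [u^R] of it, the class of the suffix [u] of [x]: the
    output is [psi_L(x)^R], i.e. [psi_L] is a left transduction.  A language of
    such outputs, restricted by a condition on the final state of the machine,
    is regular: reading [w] forward, a DFA tracks the set of machine states
    from which the still unproduced output [w] can be emitted backwards ending
    in an accepted state.  Finally the first letter of [psi_L(x)] is [[x]],
    which decides whether [x] belongs to [L]. *)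

From Pilot Require Import Defs.
From mathcomp Require Import all_boot.
From mathcomp Require Import boolp.
Set Implicit Arguments. Unset Strict Implicit. Unset Printing Implicit Defensive.

Lemma InP (T : eqType) (x : T) (s : seq T) : reflect (List.In x s) (x \in s).
Proof.
elim: s => [|y s IH] /=; first by constructor.
rewrite inE; apply: (iffP orP) => [[/eqP ->|/IH]|[->|/IH]]; by [left|right|rewrite eqxx].
Qed.

Lemma overP (T : eqType) (Alph w : seq T) : reflect (Defs.over Alph w) (all (mem Alph) w).
Proof. by apply: (iffP allP) => sub a /InP /sub /InP. Qed.

Lemma In_rev (T : Type) (x : T) (s : seq T) : List.In x (rev s) <-> List.In x s.
Proof.
have -> : rev s = List.rev s by elim: s => //= y s IH; rewrite rev_cons -cats1 IH.
by rewrite -List.in_rev.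
Qed.

Lemma regular_complete_dfa (A : eqType) (K : lang A) :
  regular K -> exists (Q : finType) (q0 : Q) (d : Q -> A -> Q) (F : pred Q),
    forall w, K w <-> dfa_accepts d q0 F w.
Proof.
case=> Alph [K_over [Q [q0 [d [F K_dfa]]]]].
pose d' (q : option Q) a := if (q, a \in Alph) is (Some q, true) then Some (d q a) else None.
have sink w : foldl d' None w = None by elim: w.
have run_d' w q : foldl d' (Some q) w = if all (mem Alph) w then Some (foldl d q w) else None.
  by elim: w q => [|a w IH] q //=; rewrite /d'; case: (a \in Alph) => /=.
exists (option Q), (Some q0), d', (fun q => if q is Some q then F q else false) => w.
rewrite /dfa_accepts run_d'; case: (overP Alph w) => [Aw | nAw]; first exact: K_dfa.
by split=> // /K_over.
Qed.

Section MealyMachine.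
Variables (Q S G : Type) (delta : Q -> S -> Q * G).

Definition mealy_state (q : Q) (u : seq S) : Q := foldl (fun p b => (delta p b).1) q u.

Lemma mealy_out_cons q b u :
  mealy_out delta q (b :: u) = (delta q b).2 :: mealy_out delta (delta q b).1 u.
Proof. by rewrite /=; case: (delta q b). Qed.

Lemma mealy_out_rcons q u b :
  mealy_out delta q (rcons u b) = rcons (mealy_out delta q u) (delta (mealy_state q u) b).2.
Proof.
elim: u q => [|c u IH] q; first by rewrite mealy_out_cons.
by rewrite rcons_cons !mealy_out_cons IH.
Qed.

Lemma In_mealy_out q u c :
  List.In c (mealy_out delta q u) -> exists p b, c = (delta p b).2.
Proof.
elim: u q => [|b u IH] q //; rewrite mealy_out_cons => -[<-|/IH //].
by exists q, b.
Qed.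

End MealyMachine.

Section ReverseSubsetConstruction.
Variables (Q S : finType) (G : Type) (delta : Q -> S -> Q * G) (P : pred Q).

Definition unread_step (X : {set Q}) (c : G) : {set Q} :=
  [set p | [exists b, `[< (delta p b).2 = c >] && ((delta p b).1 \in X)]].

Lemma mem_foldl_unread_step w p :
  p \in foldl unread_step [set p | P p] w <->
  exists u, P (mealy_state delta p u) /\ w = rev (mealy_out delta p u).
Proof.
elim/last_ind: w p => [|w c IH] p.
  rewrite inE; split=> [Pp | [[|b u] [Pu]] //]; first by exists [::].
  by move/(congr1 size); rewrite size_rev mealy_out_cons.
rewrite foldl_rcons inE; split.
  case/existsP=> b /andP[/asboolP <- /IH[u [Pu ->]]].
  by exists (b :: u); rewrite mealy_out_cons rev_cons.
case=> -[|b u] [Pu]; first by move/(congr1 size); rewrite size_rcons.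
rewrite mealy_out_cons rev_cons => /rcons_inj[w_out c_out].
apply/existsP; exists b; rewrite c_out; apply/andP; split; first exact/asboolP.
by apply/IH; exists u.
Qed.

Lemma regular_img_mealy (q0 : Q) (f : seq S -> seq G) (K : lang S) :
  (forall x, f x = rev (mealy_out delta q0 (rev x))) ->
  (forall x, K x <-> P (mealy_state delta q0 (rev x))) ->
  regular (img_lang f K).
Proof.
move=> fE KE; pose out (pb : Q * S) := (delta pb.1 pb.2).2.
exists (map out (enum {: Q * S})); split.
  move=> _ [x [_ ->]] c; rewrite fE => /In_rev c_out.
  have [p [b ->]] := In_mealy_out c_out.
  by apply: (List.in_map out _ (p, b)); apply/InP; rewrite mem_enum.
exists {set Q}, [set p | P p], unread_step, (fun X : {set Q} => q0 \in X) => w _.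
rewrite /dfa_accepts mem_foldl_unread_step; split.
  by case=> x [/KE Px ->]; exists (rev x); rewrite -fE.
by case=> u [Pu ->]; exists (rev u); rewrite KE fE revK.
Qed.

End ReverseSubsetConstruction.

Definition moore_delta (T S G : Type) (step : T -> S -> T) (out : T -> G) : T -> S -> T * G :=
  fun p b => (step p b, out (step p b)).

Lemma mealy_state_moore (T S G : Type) (step : T -> S -> T) (out : T -> G) q u :
  mealy_state (moore_delta step out) q u = foldl step q u.
Proof. by []. Qed.

Section Psi.
Variables (S : Type) (L : lang S).

Lemma psi_cons a w : psi L (a :: w) = nclass L (a :: w) :: psi L w.
Proof. by rewrite /psi /= -add1n iotaDl -map_comp. Qed.

Lemma size_psi x : size (psi L x) = size x.
Proof. by rewrite size_map size_iota. Qed.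

Lemma psi_eq_lang x y : psi L x = psi L y -> L x <-> L y.
Proof.
have [|/eqP size_xy psi_xy] := eqVneq (size x) (size y).
  case: x y => [|a x] [|b y] //= _; rewrite !psi_cons => -[class_xy _].
  have : nclass L (b :: y) (b :: y) by [].
  by rewrite -class_xy => /(_ [::]); rewrite !cats0.
by case: size_xy; rewrite -size_psi psi_xy size_psi.
Qed.

Section RightToLeft.
Variables (T : Type) (f : seq S -> T) (step : T -> S -> T).
Hypothesis f_cons : forall a w, f (a :: w) = step (f w) a.

Lemma foldl_rev_step x : foldl step (f [::]) (rev x) = f x.
Proof. by elim: x => // a x IH; rewrite rev_cons foldl_rcons IH f_cons. Qed.

Variable out : T -> seq S -> Prop.
Hypothesis nclass_f : forall w, nclass L w = out (f w).

Lemma psi_moore x : psi L x = rev (mealy_out (moore_delta step out) (f [::]) (rev x)).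
Proof.
elim: x => // a x IH.
by rewrite psi_cons rev_cons mealy_out_rcons rev_rcons IH mealy_state_moore
  foldl_rev_step nclass_f f_cons.
Qed.

End RightToLeft.
End Psi.

Section TransitionMonoid.
Variables (A : Type) (Q : finType) (d : Q -> A -> Q).

Definition transformation (w : seq A) : {ffun Q -> Q} := [ffun q => foldl d q w].

Definition transformation_step (g : {ffun Q -> Q}) (a : A) : {ffun Q -> Q} :=
  [ffun q => g (d q a)].

Lemma transformation_cons a w :
  transformation (a :: w) = transformation_step (transformation w) a.
Proof. by apply/ffunP => q; rewrite !ffunE. Qed.

Variables (q0 : Q) (F : pred Q) (L : lang A).
Hypothesis L_dfa : forall w, L w <-> dfa_accepts d q0 F w.

Definition residual_class (g : {ffun Q -> Q}) : seq A -> Prop :=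
  fun y => forall z, L (y ++ z) <-> dfa_accepts d (g q0) F z.

Lemma lang_transformation w : L w <-> F (transformation w q0).
Proof. by rewrite L_dfa /dfa_accepts ffunE. Qed.

Lemma lang_cat_transformation w z : L (w ++ z) <-> dfa_accepts d (transformation w q0) F z.
Proof. by rewrite L_dfa /dfa_accepts foldl_cat ffunE. Qed.

Lemma nclass_transformation w : nclass L w = residual_class (transformation w).
Proof.
apply/funext => y; apply/propext; rewrite /nclass /nerode /residual_class.
split=> class_y z; last by rewrite lang_cat_transformation; apply: iff_sym.
by rewrite -lang_cat_transformation; apply: iff_sym.
Qed.

End TransitionMonoid.

Theorem lemma4p2 (Sigma : finType) (L : lang Sigma) :
  regular L ->
  left_transduction (psi L) /\
  regular (img_lang (psi L) (fun _ => True)) /\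
  regular (img_lang (psi L) L) /\
  left_reduction (psi L) L (img_lang (psi L) L).
Proof.
case/regular_complete_dfa => Q [q0 [d [F L_dfa]]].
pose delta := moore_delta (transformation_step d) (residual_class d q0 F L).
have psiE := psi_moore (transformation_cons d) (nclass_transformation L_dfa).
have img_regular K (P : pred {ffun Q -> Q}) :
    (forall x, K x <-> P (transformation d x)) -> regular (img_lang (psi L) K).
  move=> KE; apply: (regular_img_mealy (P := P) psiE) => x.
  by rewrite KE mealy_state_moore (foldl_rev_step (transformation_cons d)).
have transduction : left_transduction (psi L) by exists _, (transformation d [::]), delta.
split; first done.
split; first by apply: (img_regular _ xpredT) => x; split.
split; first exact: img_regular _ (fun g => F (g q0)) (lang_transformation L_dfa).
split=> // x; split=> [Lx | [y [Ly psi_xy]]]; first by exists x.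
exact/(psi_eq_lang psi_xy).
Qed.
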